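(* Let $I$ be a fuzzy implication function and $T$ a t-norm. If $I(1,y)\le y$ for all $y\in[0,1]$ and $I$ satisfies the monotonicity of the generalized modus ponens with respect to $T$ (i.e. $T(\tilde x,I(\tilde x,y))\le T(x,I(x,y))$ for all $x,\tilde x,y\in[0,1]$ with $\tilde x\le x$), then $I$ satisfies $T$-conditionality with respect to $T$, i.e. $T(x,I(x,y))\le y$ for all $x,y\in[0,1]$. In particular, if $I$ satisfies the left neutrality principle ($I(1,y)=y$ for all $y\in[0,1]$) and the monotonicity of the generalized modus ponens with respect to $T$, then $I$ satisfies $T$-conditionality with respect to $T$.
   Context: A fuzzy implication function is a map $I:[0,1]^2\to[0,1]$ decreasing in the first variable, increasing in the second, with $I(0,0)=I(1,1)=1$, $I(1,0)=0$. A t-norm is a commutative, associative binary operation on $[0,1]$, increasing in both variables, with neutral element $1$. *)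

(* reals R; operations on [0,1] modelled as R -> R -> R,
   with all axioms only required on the unit square. *)
From Stdlib Require Import Reals.
Open Scope R_scope.

Definition in01 (x : R) : Prop := 0 <= x <= 1.

Definition is_fuzzy_implication (I : R -> R -> R) : Prop :=
  (forall x y, in01 x -> in01 y -> in01 (I x y)) /\
  (forall x1 x2 y, in01 x1 -> in01 x2 -> in01 y -> x1 <= x2 -> I x2 y <= I x1 y) /\
  (forall x y1 y2, in01 x -> in01 y1 -> in01 y2 -> y1 <= y2 -> I x y1 <= I x y2) /\
  I 0 0 = 1 /\ I 1 1 = 1 /\ I 1 0 = 0.

Definition is_tnorm (T : R -> R -> R) : Prop :=
  (forall x y, in01 x -> in01 y -> in01 (T x y)) /\
  (forall x y, in01 x -> in01 y -> T x y = T y x) /\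
  (forall x y z, in01 x -> in01 y -> in01 z -> T x (T y z) = T (T x y) z) /\
  (forall x1 x2 y, in01 x1 -> in01 x2 -> in01 y -> x1 <= x2 -> T x1 y <= T x2 y) /\
  (forall x y1 y2, in01 x -> in01 y1 -> in01 y2 -> y1 <= y2 -> T x y1 <= T x y2) /\
  (forall x, in01 x -> T x 1 = x).

Definition monotone_GMP (I T : R -> R -> R) : Prop :=
  forall x xt y, in01 x -> in01 xt -> in01 y -> xt <= x ->
    T xt (I xt y) <= T x (I x y).

Definition T_conditional (I T : R -> R -> R) : Prop :=
  forall x y, in01 x -> in01 y -> T x (I x y) <= y.

Definition left_neutral (I : R -> R -> R) : Prop :=
  forall y, in01 y -> I 1 y = y.

From Stdlib Require Import Reals Lra.
Open Scope R_scope.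

Lemma in01_1 : in01 1.
Proof. unfold in01; lra. Qed.

Lemma tnorm_1l (T : R -> R -> R) (y : R) :
  is_tnorm T -> in01 y -> T 1 y = y.
Proof.
  intros [_ [Tcomm [_ [_ [_ T1r]]]]] Hy.
  rewrite (Tcomm 1 y in01_1 Hy); apply T1r; exact Hy.
Qed.

Lemma left_neutral_le (I : R -> R -> R) :
  left_neutral I -> forall y, in01 y -> I 1 y <= y.
Proof. intros Hn y Hy; rewrite (Hn y Hy); apply Rle_refl. Qed.

(* Compare the modus ponens at x with the one at 1 >= x, where T(1, I(1,y)) = I(1,y). *)
Lemma monotone_GMP_T_conditional (I T : R -> R -> R) :
  is_fuzzy_implication I -> is_tnorm T ->
  (forall y, in01 y -> I 1 y <= y) -> monotone_GMP I T -> T_conditional I T.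
Proof.
  intros [Irange _] HT HI1 Hgmp x y Hx Hy.
  assert (Hx1 : x <= 1) by (destruct Hx; lra).
  apply Rle_trans with (T 1 (I 1 y)).
  - exact (Hgmp 1 x y in01_1 Hx Hy Hx1).
  - rewrite (tnorm_1l T (I 1 y) HT (Irange 1 y in01_1 Hy)).
    exact (HI1 y Hy).
Qed.

Theorem proposition9 (I T : R -> R -> R) :
  is_fuzzy_implication I -> is_tnorm T ->
  ((forall y, in01 y -> I 1 y <= y) -> monotone_GMP I T -> T_conditional I T) /\
  (left_neutral I -> monotone_GMP I T -> T_conditional I T).
Proof.
  intros HI HT; split.
  - exact (monotone_GMP_T_conditional I T HI HT).
  - intros Hn; exact (monotone_GMP_T_conditional I T HI HT (left_neutral_le I Hn)).
Qed.
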